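(* If $\mathfrak R$ is a cubical iterated graph system, the Sierpiński gasket iterated graph system, or the pentagonal Sierpiński carpet iterated graph system, with replacement graphs $G_n$, then there are constants $C_{\mathrm{diam}}\ge1$ and $L_*>1$ such that for all $n\in\mathbb N$ \[ C_{\mathrm{diam}}^{-1}\cdot L_*^n\le\operatorname{diam}(G_n)\le C_{\mathrm{diam}}\cdot L_*^n, \] where $\operatorname{diam}(G_n)$ is the diameter with respect to the path metric of $G_n$.
   Context: Graphs: $(V,E)$, $V$ finite non-empty, $E\subseteq V\times V$, $(x,y)\in E\Rightarrow(y,x)\notin E$; $\{x,y\}\in E$ means either orientation; $d_G$ is the shortest-path metric in the underlying undirected graph. An iterated graph system (IGS) $\mathfrak R$ consists of a connected graph $G_1=(S,E)$, a finite set $\mathcal T$ of types, a surjective typing $\mathfrak t:E\to\mathcal T$ and non-empty gluing rules $I_t\subseteq S\times S$. With $W_m=S^m$, $[w]_k=w_1\cdots w_k$, the replacement graphs $G_m=(W_m,E_m)$ are defined recursively: $(w,v)\in E_{m+1}$ iff either (1) $[w]_m=[v]_m$ and $(w_{m+1},v_{m+1})\in E$ (type $\mathfrak t(w_{m+1},v_{m+1})$), or (2) $([w]_m,[v]_m)\in E_m$ and $(w_{m+1},v_{m+1})\in I_{\mathfrak t([w]_m,[v]_m)}$ (type $\mathfrak t([w]_m,[v]_m)$). Mapping of IGS $\varphi:\mathfrak R\to\mathfrak R'$: a graph mapping $G_1\to G_1'$ (edges go to edges or are collapsed) such that (i) if $\varphi(w_1)=\varphi(v_1)$ for an edge $\{w_1,v_1\}$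 of type $t$ then $\varphi(w_2)=\varphi(v_2)$ for all $(w_2,v_2)\in I_t$; (ii) if $(w_1,v_1)\in E$ has type $t$ and $(\varphi(w_1),\varphi(v_1))\in E'$ has type $t'$ then $(\varphi(w_2),\varphi(v_2))\in I'_{t'}$ for all $(w_2,v_2)\in I_t$; (iii) if $(w_1,v_1)\in E$ has type $t$ and $(\varphi(v_1),\varphi(w_1))\in E'$ has type $t'$ then $(\varphi(v_2),\varphi(w_2))\in I'_{t'}$ for all $(w_2,v_2)\in I_t$. Isomorphism of IGS: graph isomorphism with it and its inverse mappings of IGS; sub-system $\mathfrak R\subseteq\mathfrak R'$: $S\subseteq S'$, same types, inclusion a mapping of IGS. Cubical IGS: for integers $d_*\ge1,s_*\ge1,L_*\ge3$, $\mathfrak R(d_*,L_*,s_* )$ has symbols $\{1,\dots,L_*\}^{d_*}\times\{\underline1,\dots,\underline{s_*}\}$ with coordinates $c_i$ and sheet $s$; types $t_1,\dots,t_{d_*}$; $(w,v)$ is an edge of type $t_j$ iff $c_i(v)=c_i(w)$ ($i\ne j$), $c_j(v)=c_j(w)+1$; $(w,v)\in I_{t_j}$ iff $c_i(w)=c_i(v)$ ($i\ne j$), $(c_j(w),c_j(v))=(L_*,1)$, $s(w)=s(v)$. Sheet- and other-coordinate-preserving maps: $\eta_j:c_j\mapsto L_*+1-c_j$; $\alpha^+_{j,k}$ ($j\ne k$) swaps $c_j,c_k$; $\alpha^-_{j,k}$: $c_k\mapsto L_*+1-c_j$, $c_j\mapsto L_*+1-c_k$; $\mathcal G$ the set of these.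 A cubical IGS is a sub-system $\mathfrak R\subseteq\mathfrak R(d_*,L_*,s_* )$ with: (C1) for each $j$, every symbol with $c_i\in\{1,L_*\}$ for all $i\ne j$ and sheet $\underline1$ (condition $(\ast_j)$) is in $S(\mathfrak R)$; (C2) if $w,v$ satisfy $(\ast_j)$, agree off coordinate $j$, and $c_j(v)=c_j(w)+1$, then $(w,v)\in E(\mathfrak R)$; (C3) if $w,v$ satisfy $(\ast_j)$, agree off coordinate $j$, and $(c_j(w),c_j(v))=(L_*,1)$, then $(w,v)\in I_{t_j}(\mathfrak R)$; (C4) each $\alpha\in\mathcal G$ restricts to an isomorphism of IGS $\mathfrak R\to\mathfrak R$. Sierpiński gasket: $S=\{0,1,2\}$, $E=\{(0,1),(1,2),(0,2)\}$ of types $a,b,c$, $I_a=\{(1,0)\}$, $I_b=\{(2,1)\}$, $I_c=\{(2,0)\}$. Pentagonal Sierpiński carpet: $S=\{0,\dots,4\}$, $E=\{(0,1),(1,2),(2,3),(3,4),(4,0)\}$ of types $a,b,c,d,e$, $I_a=\{(1,0),(2,4)\}$, $I_b=\{(2,1),(3,0)\}$, $I_c=\{(3,2),(4,1)\}$, $I_d=\{(4,3),(0,2)\}$, $I_e=\{(0,4),(1,3)\}$. *)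

From Stdlib Require Import Reals.
From mathcomp Require Import all_boot.

Record igs (T : finType) := IGS {
  sym : finType;                 (* symbols S = vertices of G_1 *)
  edge : rel sym;
  etype : sym -> sym -> T;       (* typing t (only meaningful on edges) *)
  glue : T -> rel sym
}.
Arguments sym {T} i.
Arguments edge {T} i.
Arguments etype {T} i.
Arguments glue {T} i.

Definition undirected {T} (G : igs T) : rel (sym G) :=
  fun x y => edge G x y || edge G y x.

Definition is_igs {T} (G : igs T) : Prop :=
  (exists x : sym G, True) /\
  (forall x y, edge G x y -> ~~ edge G y x) /\
  (forall x y : sym G, connect (undirected G) x y) /\
  (forall t : T, exists x y, edge G x y /\ etype G x y = t) /\
  (forall t : T, exists x y, glue G t x y).

Definition is_mapping {T T'} (G : igs T) (G' : igs T') (f : sym G -> sym G') : Prop :=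
  (forall w v, edge G w v ->
     f w = f v \/ edge G' (f w) (f v) \/ edge G' (f v) (f w)) /\
  (forall w v, edge G w v -> f w = f v ->
     forall w2 v2, glue G (etype G w v) w2 v2 -> f w2 = f v2) /\
  (forall w v, edge G w v -> edge G' (f w) (f v) ->
     forall w2 v2, glue G (etype G w v) w2 v2 ->
       glue G' (etype G' (f w) (f v)) (f w2) (f v2)) /\
  (forall w v, edge G w v -> edge G' (f v) (f w) ->
     forall w2 v2, glue G (etype G w v) w2 v2 ->
       glue G' (etype G' (f v) (f w)) (f v2) (f w2)).

Definition is_iso {T T'} (G : igs T) (G' : igs T') (f : sym G -> sym G') : Prop :=
  exists g : sym G' -> sym G,
    cancel f g /\ cancel g f /\ is_mapping G G' f /\ is_mapping G' G g.

(* Replacement graphs G_m.  Words w = w_1...w_m are m-tuples; the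
   recursion below acts on reversed words (head = last letter w_m). *)
Fixpoint redge {T} (G : igs T) (w v : seq (sym G)) : option T :=
  match w, v with
  | x :: w', y :: v' =>
      if w' == v' then (if edge G x y then Some (etype G x y) else None)
      else match redge G w' v' with
           | Some t => if glue G t x y then Some t else None
           | None => None
           end
  | _, _ => None
  end.

Definition rg_edge {T} (G : igs T) (m : nat) : rel (m.-tuple (sym G)) :=
  fun w v => redge G (rev w) (rev v) != None.

Definition rg_adj {T} (G : igs T) (m : nat) : rel (m.-tuple (sym G)) :=
  fun w v => rg_edge G m w v || rg_edge G m v w.

Definition is_diam {T} (G : igs T) (m : nat) (D : nat) : Prop :=
  (forall x y : m.-tuple (sym G), exists p,
      path (rg_adj G m) x p /\ last x p = y /\ size p <= D) /\
  (exists x y : m.-tuple (sym G), forall p,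
      path (rg_adj G m) x p -> last x p = y -> D <= size p).

Definition diam_estimate {T} (G : igs T) : Prop :=
  exists C Ls : R, Rle 1 C /\ Rlt 1 Ls /\
    forall n : nat, 0 < n -> exists D : nat,
      is_diam G n D /\
      Rle (Rmult (Rinv C) (pow Ls n)) (INR D) /\
      Rle (INR D) (Rmult C (pow Ls n)).

(* Cubical IGS R(d,L,s).  Coordinates {1..L} are encoded as 'I_L
   (value c-1), sheets {1..s} as 'I_s (value sheet-1). Type t_j = j : 'I_d. *)
Definition cube_sym (d L s : nat) : finType := ({ffun 'I_d -> 'I_L} * 'I_s)%type.

Definition agree_off {d L s} (j : 'I_d) (w v : cube_sym d L s) : bool :=
  [forall i, (i != j) ==> (w.1 i == v.1 i)].

Definition cube_edge {d L s} (j : 'I_d) (w v : cube_sym d L s) : bool :=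
  agree_off j w v && (val (v.1 j) == (val (w.1 j)).+1).

Definition cube_glue {d L s} (j : 'I_d) (w v : cube_sym d L s) : bool :=
  [&& agree_off j w v, val (w.1 j) == L.-1, val (v.1 j) == 0 & w.2 == v.2].

Definition cube_igs d L s (hd : 0 < d) : igs 'I_d :=
  @IGS 'I_d (cube_sym d L s)
    (fun w v => [exists j, cube_edge j w v])
    (fun w v => odflt (Ordinal hd) [pick j | cube_edge j w v])
    (fun j w v => cube_glue j w v).

Definition star {d L s} (j : 'I_d) (x : cube_sym d L s) : bool :=
  [forall i, (i != j) ==> ((val (x.1 i) == 0) || (val (x.1 i) == L.-1))]
  && (val x.2 == 0).

Definition cube_eta {d L s} (j : 'I_d) (x : cube_sym d L s) : cube_sym d L s :=
  ([ffun i => if i == j then rev_ord (x.1 i) else x.1 i], x.2).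
Definition cube_alphap {d L s} (j k : 'I_d) (x : cube_sym d L s) : cube_sym d L s :=
  ([ffun i => if i == j then x.1 k else if i == k then x.1 j else x.1 i], x.2).
Definition cube_alpham {d L s} (j k : 'I_d) (x : cube_sym d L s) : cube_sym d L s :=
  ([ffun i => if i == k then rev_ord (x.1 j)
              else if i == j then rev_ord (x.1 k) else x.1 i], x.2).

Definition cube_G {d L s} (a : cube_sym d L s -> cube_sym d L s) : Prop :=
  (exists j, a =1 cube_eta j) \/
  (exists j k, j != k /\ (a =1 cube_alphap j k \/ a =1 cube_alpham j k)).

(* G is a cubical IGS, realised as a sub-system of R(d,L,s) via the
   inclusion iota (S(G) ⊆ S' is modelled by an injective iota). *)
Definition cubical d L s (hd : 0 < d) (G : igs 'I_d)
    (iota : sym G -> cube_sym d L s) : Prop :=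
  is_igs G /\ injective iota /\ is_mapping G (cube_igs d L s hd) iota /\
  (forall j (x : cube_sym d L s), star j x -> exists y, iota y = x) /\
  (forall j (w v : sym G), star j (iota w) -> star j (iota v) ->
     agree_off j (iota w) (iota v) ->
     val ((iota v).1 j) = (val ((iota w).1 j)).+1 -> edge G w v) /\
  (forall j (w v : sym G), star j (iota w) -> star j (iota v) ->
     agree_off j (iota w) (iota v) ->
     val ((iota w).1 j) = L.-1 -> val ((iota v).1 j) = 0 -> glue G j w v) /\
  (forall a, cube_G a -> exists b : sym G -> sym G,
     (forall x, iota (b x) = a (iota x)) /\ is_iso G G b).

(* Sierpinski gasket: symbols 0,1,2; types a,b,c = 0,1,2. *)
Definition gasket_edge : rel 'I_3 := fun x y =>
  [|| (val x == 0) && (val y == 1), (val x == 1) && (val y == 2)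
    | (val x == 0) && (val y == 2)].
Definition gasket_type (x y : 'I_3) : 'I_3 :=
  if (val x == 0) && (val y == 1) then inord 0
  else if (val x == 1) && (val y == 2) then inord 1 else inord 2.
Definition gasket_glue (t : 'I_3) : rel 'I_3 := fun x y =>
  if val t == 0 then (val x == 1) && (val y == 0)
  else if val t == 1 then (val x == 2) && (val y == 1)
  else (val x == 2) && (val y == 0).
Definition gasket : igs 'I_3 := @IGS 'I_3 'I_3 gasket_edge gasket_type gasket_glue.

(* Pentagonal Sierpinski carpet: symbols 0..4; types a..e = 0..4.
   E = {(i, i+1 mod 5)} with type i;
   I_i = {(i+1, i), (i+2, i+4)} (mod 5). *)
Definition carpet_edge : rel 'I_5 := fun x y => val y == (val x).+1 %% 5.
Definition carpet_type (x y : 'I_5) : 'I_5 := x.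
Definition carpet_glue (t : 'I_5) : rel 'I_5 := fun x y =>
  ((val x == (val t).+1 %% 5) && (val y == val t))
  || ((val x == (val t + 2) %% 5) && (val y == (val t + 4) %% 5)).
Definition carpet : igs 'I_5 := @IGS 'I_5 'I_5 carpet_edge carpet_type carpet_glue.

From Stdlib Require Import Reals.
From mathcomp Require Import all_boot zify.

Set Implicit Arguments.
Unset Strict Implicit.
Unset Printing Implicit Defensive.

(* G_(n+1) is made of #|S| copies of G_n, one for each first letter; an edge
   (a, b) of type t of G_1 joins the word a u to the word b v whenever all
   pairs (u_i, v_i) lie in I_t.

   Upper bound: every word of G_n reaches a fixed constant word c^n in
   O(L^n) steps.  Inside the copy of its first letter this is induction;
   then a walk of G_1 leads from copy to copy, each crossing being made
   between constant words of a gluing rule, which are O(L^n) apart.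

   Lower bound: a 1-Lipschitz potential on G_n separating two words by
   L^n - 1.  For the gasket and the cubical systems it is the base-L number
   whose digits are the heights of the letters, a height being additive along
   edges and compatible with the gluing rules.  The pentagonal carpet has no
   such height (its steps would sum to zero around the oriented pentagon);
   there the potential bounds the distance to one side of the pentagon from
   below, is at least 2^n - 1 on the two sides not adjacent to it, and is
   built copy by copy from the potential of G_n. *)

Section FiniteGraph.
Variables (V : finType) (e : rel V).

Definition reach (k : nat) (x y : V) : Prop :=
  exists p, path e x p /\ last x p = y /\ size p <= k.

Definition is_diameter (D : nat) : Prop :=
  (forall x y, reach D x y) /\
  (exists x y, forall p, path e x p -> last x p = y -> D <= size p).

Lemma reach_refl k x : reach k x x.
Proof. by exists [::]. Qed.

Lemma reach_le k k' x y : k <= k' -> reach k x y -> reach k' x y.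
Proof. by move=> le_kk' [p [ep [lp sp]]]; exists p; do !split=> //; exact: leq_trans le_kk'. Qed.

Lemma reach_trans k1 k2 x y z : reach k1 x y -> reach k2 y z -> reach (k1 + k2) x z.
Proof.
move=> [p [ep [<- sp]]] [q [eq [<- sq]]]; exists (p ++ q).
by rewrite cat_path last_cat size_cat ep eq leq_add.
Qed.

Lemma reach1 x y : e x y -> reach 1 x y.
Proof. by move=> exy; exists [:: y]; rewrite /= exy. Qed.

Lemma reach_sym k x y : symmetric e -> reach k x y -> reach k y x.
Proof.
move=> e_sym [p [ep [<- sp]]]; exists (rev (belast x p)).
rewrite size_rev size_belast; split; last split=> //.
  by rewrite rev_path; apply: sub_path ep => u v; rewrite e_sym.
by case: p {ep sp} => //= z q; rewrite rev_cons last_rcons.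
Qed.

Lemma connect_reach x y : connect e x y -> reach #|V|.-1 x y.
Proof.
move/connectP=> [p ep ->]; have [q eq uq _] := shortenP ep.
exists q; do !split => //; have := max_card (mem (x :: q)).
by rewrite (card_uniqP uq) /=; lia.
Qed.

Fixpoint reachb (k : nat) (x y : V) : bool :=
  (x == y) || if k is k'.+1 then [exists z, e x z && reachb k' z y] else false.

Lemma reachP k x y : reflect (reach k x y) (reachb k x y).
Proof.
elim: k x => [|k IHk] x /=.
  rewrite orbF; apply: (iffP eqP) => [->|[[|z p] [_ [/= <- //]]]]; exact: reach_refl.
apply: (iffP orP) => [[/eqP->|/existsP[z /andP[exz /IHk rzy]]]|[[|z p] [/= ep [lp sp]]]].
- exact: reach_refl.
- by apply: (reach_trans (reach1 exz)) rzy.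
- by left; apply/eqP.
- right; apply/existsP; exists z; case/andP: ep => -> ep /=.
  by apply/IHk; exists p.
Qed.

Lemma is_diameter_between U K x0 y0 :
  (forall x y, reach U x y) ->
  (forall p, path e x0 p -> last x0 p = y0 -> K <= size p) ->
  exists D, [/\ is_diameter D, K <= D & D <= U].
Proof.
move=> reachU lowK.
have exD : exists k, [forall x, forall y, reachb k x y].
  by exists U; do 2 apply/forallP => ?; apply/reachP.
case: (ex_minnP exD) => D /forallP reachD minD.
have {}reachD x y : reach D x y by apply/reachP; exact: (forallP (reachD x) y).
exists D; split.
- split=> //; case: D reachD minD => [|k] _ minD; first by exists x0, x0.
  have /forallPn[x /forallPn[y /negP nrxy]] : ~~ [forall x, forall y, reachb k x y].
    by apply/negP => /minD; rewrite ltnn.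
  exists x, y => p ep lp; rewrite ltnNge; apply/negP => sp.
  by apply: nrxy; apply/reachP; exists p.
- by have [p [ep [lp sp]]] := reachD x0 y0; exact: leq_trans (lowK p ep lp) sp.
- by apply: minD; do 2 apply/forallP => ?; apply/reachP.
Qed.

Definition lipschitz (f : V -> nat) : Prop := forall x y, e x y -> f y <= (f x).+1.

Lemma lipschitz_path f x p : lipschitz f -> path e x p -> f (last x p) <= f x + size p.
Proof.
move=> lip_f; elim: p x => [|y p IHp] x /=; first by rewrite addn0.
by case/andP => /lip_f exy /IHp; lia.
Qed.

Lemma lipschitz_path_lower f x y K :
  lipschitz f -> f x + K <= f y ->
  forall p, path e x p -> last x p = y -> K <= size p.
Proof. by move=> lip_f le_xy p /(lipschitz_path lip_f) + lp; rewrite lp; lia. Qed.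

Lemma lipschitz_const c : lipschitz (fun=> c).
Proof. by []. Qed.

Lemma lipschitz_addl c f : lipschitz f -> lipschitz (fun x => c + f x).
Proof. by move=> lip_f x y /lip_f; lia. Qed.

Lemma lipschitz_min f g : lipschitz f -> lipschitz g -> lipschitz (fun x => minn (f x) (g x)).
Proof. by move=> lip_f lip_g x y exy; have := lip_f _ _ exy; have := lip_g _ _ exy; lia. Qed.

End FiniteGraph.

Lemma reach_homo (V V' : finType) (e : rel V) (e' : rel V') (h : V -> V') k x y :
  {homo h : u v / e u v >-> e' u v} -> reach e k x y -> reach e' k (h x) (h y).
Proof.
move=> h_homo [p [ep [<- sp]]]; exists (map h p).
by rewrite path_map last_map size_map; split=> //; apply: sub_path ep.
Qed.

Lemma lipschitz_homo (V V' : finType) (e : rel V) (e' : rel V') (h : V -> V') f :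
  {homo h : u v / e u v >-> e' u v} -> lipschitz e' f -> lipschitz e (f \o h).
Proof. by move=> h_homo lip_f x y /h_homo /lip_f. Qed.

Lemma all2_rev (A B : Type) (r : A -> B -> bool) s t : size s = size t ->
  all2 r (rev s) (rev t) = all2 r s t.
Proof. by move=> eq_st; rewrite !all2E !size_rev -rev_zip // all_rev. Qed.

Lemma all2_nseq (A B : Type) (r : A -> B -> bool) n x y :
  all2 r (nseq n x) (nseq n y) = (n == 0) || r x y.
Proof. by elim: n => //= n ->; case: (r x y); rewrite ?orbT. Qed.

Lemma nseq_tupleS (A : Type) n (x : A) : nseq_tuple n.+1 x = [tuple of x :: nseq_tuple n x].
Proof. exact: val_inj. Qed.

Lemma is_igs_irreflexive T (G : igs T) : is_igs G -> irreflexive (edge G).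
Proof. by case=> _ [asym _] x; apply/negP => exx; move: (asym x x exx); rewrite exx. Qed.

Section ReplacementGraph.
Variables (T : finType) (G : igs T).
Hypothesis edge_irr : irreflexive (edge G).

Lemma redge_refl w : redge G w w = None.
Proof. by case: w => //= x w; rewrite eqxx edge_irr. Qed.

Lemma redge_cat a a' b b' : size a = size a' ->
  redge G (a ++ b) (a' ++ b') =
  if b == b' then redge G a a'
  else obind (fun t => if all2 (glue G t) a a' then Some t else None) (redge G b b').
Proof.
elim: a a' => [|x a IHa] [|y a'] //= => [_ | [eq_aa']].
  by case: eqP => [->|_]; [rewrite redge_refl | case: (redge G b b')].
rewrite eqseq_cat // IHa //; case: (b == b'); rewrite ?andbT ?andbF //.
by case: (redge G b b') => //= t; case: (all2 _ a a'); case: (glue G t x y).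
Qed.

Lemma rg_edge_cons m a b (w v : m.-tuple (sym G)) :
  rg_edge G m.+1 [tuple of a :: w] [tuple of b :: v] =
  if a == b then rg_edge G m w v
  else edge G a b && all2 (glue G (etype G a b)) w v.
Proof.
rewrite /rg_edge /= !rev_cons -!cats1 redge_cat ?size_rev ?size_tuple //.
have -> : ([:: a] == [:: b]) = (a == b) by apply/eqP/eqP => [[]|->].
case: (a =P b) => // _ /=; case: (edge G a b) => //=.
by rewrite all2_rev ?size_tuple //; case: all2.
Qed.

Lemma rg_adj_sym m : symmetric (rg_adj G m).
Proof. by move=> x y; rewrite /rg_adj orbC. Qed.

Lemma rg_adj_cons m a b (w v : m.-tuple (sym G)) :
  rg_adj G m.+1 [tuple of a :: w] [tuple of b :: v] =
  if a == b then rg_adj G m w v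
  else (edge G a b && all2 (glue G (etype G a b)) w v) ||
       (edge G b a && all2 (glue G (etype G b a)) v w).
Proof. by rewrite /rg_adj !rg_edge_cons eq_sym; case: eqP => // ->. Qed.

Lemma reach_cons m k a (w v : m.-tuple (sym G)) :
  reach (rg_adj G m) k w v ->
  reach (rg_adj G m.+1) k [tuple of a :: w] [tuple of a :: v].
Proof.
apply: (reach_homo (h := fun t : m.-tuple _ => [tuple of a :: t])) => x y.
by rewrite rg_adj_cons eqxx.
Qed.

Lemma rg_adj_glue n a b x y : edge G a b -> glue G (etype G a b) x y ->
  rg_adj G n.+1 [tuple of a :: nseq_tuple n x] [tuple of b :: nseq_tuple n y].
Proof.
move=> eab gxy; rewrite rg_adj_cons all2_nseq gxy eab orbT /=.
by case: eqP eab => // ->; rewrite edge_irr.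
Qed.

Section ReversibleGluing.
Hypothesis glue_rev : forall x y, edge G x y -> glue G (etype G x y) y x.

(* x^(n+1) -> x y^n -> y x^n -> y^(n+1), the middle step being an edge
   because (y, x) is glued. *)
Lemma reach_nseq_edge n x y : edge G x y ->
  reach (rg_adj G n) (2 ^ n).-1 (nseq_tuple n x) (nseq_tuple n y).
Proof.
move=> exy; elim: n => [|n IHn]; first by exists [::]; do !split; apply: val_inj.
have x_y := reach_cons x IHn; have y_y := reach_cons y IHn.
have cross := reach1 (rg_adj_glue n exy (glue_rev exy)).
rewrite !nseq_tupleS; apply: reach_le _ (reach_trans x_y (reach_trans cross y_y)).
by rewrite expnS; have := expn_gt0 2 n; lia.
Qed.

Lemma reach_nseq n k x y : reach (undirected G) k x y ->
  reach (rg_adj G n) (k * (2 ^ n).-1) (nseq_tuple n x) (nseq_tuple n y).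
Proof.
move=> [p [ep [<- sp]]]; apply: (reach_le (k := size p * (2 ^ n).-1)).
  by rewrite leq_mul2r sp orbT.
elim: p x {sp} ep => [|z p IHp] x /=; first by move=> _; exact: reach_refl.
case/andP => /orP[exz|ezx] /IHp rz; apply: reach_trans rz.
  exact: reach_nseq_edge.
by apply: reach_sym (reach_nseq_edge n ezx); exact: rg_adj_sym.
Qed.

End ReversibleGluing.

End ReplacementGraph.

Section SymbolMap.
Variables (T : finType) (G : igs T) (f : sym G -> sym G) (g : T -> T).
Hypothesis f_inj : injective f.

Lemma redge_map :
  (forall x y, edge G (f x) (f y) = edge G x y) ->
  (forall x y, edge G x y -> etype G (f x) (f y) = g (etype G x y)) ->
  (forall t x y, glue G (g t) (f x) (f y) = glue G t x y) ->
  forall w v, redge G (map f w) (map f v) = omap g (redge G w v).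
Proof.
move=> f_edge f_type f_glue; elim=> [|x w IHw] [|y v] //=.
rewrite (inj_eq (inj_map f_inj)) f_edge; case: (w == v).
  by case exy: (edge G x y); rewrite //= f_type.
by rewrite IHw; case: (redge G w v) => //= t; rewrite f_glue; case: ifP.
Qed.

Lemma redge_map_flip :
  (forall x y, edge G (f x) (f y) = edge G y x) ->
  (forall x y, edge G y x -> etype G (f x) (f y) = g (etype G y x)) ->
  (forall t x y, glue G (g t) (f x) (f y) = glue G t y x) ->
  forall w v, redge G (map f w) (map f v) = omap g (redge G v w).
Proof.
move=> f_edge f_type f_glue; elim=> [|x w IHw] [|y v] //=.
rewrite (inj_eq (inj_map f_inj)) f_edge eq_sym; case: (v == w).
  by case eyx: (edge G y x); rewrite //= f_type.
by rewrite IHw; case: (redge G v w) => //= t; rewrite f_glue; case: ifP.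
Qed.

Lemma rg_adj_map m :
  (forall x y, edge G (f x) (f y) = edge G x y) ->
  (forall x y, edge G x y -> etype G (f x) (f y) = g (etype G x y)) ->
  (forall t x y, glue G (g t) (f x) (f y) = glue G t x y) ->
  forall w v : m.-tuple (sym G), rg_adj G m (map_tuple f w) (map_tuple f v) = rg_adj G m w v.
Proof.
move=> f_edge f_type f_glue w v.
rewrite /rg_adj /rg_edge /= -!map_rev !(redge_map f_edge f_type f_glue).
by case: (redge G _ _); case: (redge G _ _).
Qed.

Lemma rg_adj_map_flip m :
  (forall x y, edge G (f x) (f y) = edge G y x) ->
  (forall x y, edge G y x -> etype G (f x) (f y) = g (etype G y x)) ->
  (forall t x y, glue G (g t) (f x) (f y) = glue G t y x) ->
  forall w v : m.-tuple (sym G), rg_adj G m (map_tuple f w) (map_tuple f v) = rg_adj G m w v.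
Proof.
move=> f_edge f_type f_glue w v.
rewrite /rg_adj /rg_edge /= -!map_rev !(redge_map_flip f_edge f_type f_glue).
by case: (redge G _ _); case: (redge G _ _).
Qed.

End SymbolMap.

Section UpperBound.
Variables (T : finType) (G : igs T).
Hypothesis edge_irr : irreflexive (edge G).
Variables (hub : pred (sym G)) (c0 : sym G) (L E : nat).
Hypotheses (hub_c0 : hub c0) (L_gt1 : 1 < L).
Hypothesis glue_hub : forall x y, edge G x y ->
  exists u v, [/\ hub u, hub v & glue G (etype G x y) u v].
Hypothesis connected : forall x, connect (undirected G) x c0.
Hypothesis reach_hub : forall n u v, hub u -> hub v ->
  reach (rg_adj G n) (E * L ^ n) (nseq_tuple n u) (nseq_tuple n v).

(* Following a walk of G_1 through the copies of G_n: inside a copy go from a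
   constant hub word to the hub word glued to the next copy, then cross. *)
Lemma reach_walk n p : forall a u, hub u ->
  path (undirected G) a p -> last a p = c0 ->
  reach (rg_adj G n.+1) (size p * (E * L ^ n).+1 + E * L ^ n)
    [tuple of a :: nseq_tuple n u] (nseq_tuple n.+1 c0).
Proof.
elim: p => [|b p IHp] a u hub_u.
  move=> _ a_c0; rewrite (a_c0 : a = c0) mul0n add0n nseq_tupleS.
  exact: (reach_cons edge_irr c0 (reach_hub n hub_u hub_c0)).
case/andP=> eab walk_b last_b.
have [u' [v [hub_u' hub_v cross]]] : exists u' v, [/\ hub u', hub v &
    rg_adj G n.+1 [tuple of a :: nseq_tuple n u'] [tuple of b :: nseq_tuple n v]].
  case/orP: eab => [eab|eba].
    have [u' [v [? ? g_uv]]] := glue_hub eab.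
    by exists u', v; split=> //; exact: (rg_adj_glue edge_irr n eab g_uv).
  have [v [u' [? ? g_vu]]] := glue_hub eba.
  by exists u', v; split=> //; rewrite rg_adj_sym; exact: (rg_adj_glue edge_irr n eba g_vu).
have to_u' := reach_cons edge_irr a (reach_hub n hub_u hub_u').
have := reach_trans to_u' (reach_trans (reach1 cross) (IHp b v hub_v walk_b last_b)).
by apply: reach_le; rewrite /= mulSn; lia.
Qed.

Lemma reach_base_word n (x : n.-tuple (sym G)) :
  reach (rg_adj G n) (#|sym G| * E.+1 * L ^ n) x (nseq_tuple n c0).
Proof.
elim: n x => [|n IHn] x; first by exists [::]; do !split; apply: val_inj; case: x => [[]].
case/tupleP: x => a x.
have [p [walk_p [last_p size_p]]] := connect_reach (connected a).
have := reach_trans (reach_cons edge_irr a (IHn x)) (reach_walk n hub_c0 walk_p last_p).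
apply: reach_le; rewrite expnS.
have : 0 < L ^ n by rewrite expn_gt0 ltnW.
have : 0 < #|sym G| by apply/card_gt0P; exists a.
move: (L ^ n) (#|sym G|) size_p => Ln N; nia.
Qed.

Lemma reach_upper n (x y : n.-tuple (sym G)) :
  reach (rg_adj G n) (2 * #|sym G| * E.+1 * L ^ n) x y.
Proof.
have := reach_trans (reach_base_word x) (reach_sym (@rg_adj_sym _ _ n) (reach_base_word y)).
by apply: reach_le; lia.
Qed.

End UpperBound.

Section HeightFunction.
Variables (T : finType) (G : igs T) (L : nat) (height : sym G -> nat) (step : T -> nat).
Hypothesis height_edge : forall x y, edge G x y -> height y = height x + step (etype G x y).
Hypothesis height_glue : forall t x y, glue G t x y -> height x + step t = L * step t + height y.
Hypothesis step_le1 : forall t, step t <= 1.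

(* Applied to [rev w], this reads the word [w] in base [L] with digits [height w_i]. *)
Fixpoint word_height (w : seq (sym G)) : nat :=
  if w is x :: w' then L * word_height w' + height x else 0.

Lemma word_height_redge w v t : redge G w v = Some t -> word_height v = word_height w + step t.
Proof.
elim: w v t => [|x w IHw] [|y v] t //=; case: ifP => [/eqP <-|_].
  by case: ifP => // exy [<-]; rewrite (height_edge exy) addnA.
case rwv: (redge G w v) => [t'|] //; case: ifP => // gxy [<-].
by rewrite (IHw _ _ rwv) mulnDr; have := height_glue gxy; lia.
Qed.

Lemma word_height_lipschitz m :
  lipschitz (rg_adj G m) (fun w : m.-tuple (sym G) => word_height (rev w)).
Proof.
move=> x y; rewrite /rg_adj /rg_edge.
by case/orP; case rxy: redge => [t|] // _; have := word_height_redge rxy; have := step_le1 t; lia.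
Qed.

Lemma word_height_nseq0 n x : height x = 0 -> word_height (nseq n x) = 0.
Proof. by move=> hx0; elim: n => //= n ->; rewrite hx0 muln0. Qed.

Lemma word_height_nseq_max n x : 0 < L -> height x = L.-1 -> word_height (nseq n x) = (L ^ n).-1.
Proof.
move=> L_gt0 hx; elim: n => //= n ->; rewrite hx expnS.
by have := expn_gt0 L n; rewrite L_gt0; move: (L ^ n) => Ln; nia.
Qed.

Lemma height_path_lower m x y : 0 < L -> height x = 0 -> height y = L.-1 ->
  forall p, path (rg_adj G m) (nseq_tuple m x) p -> last (nseq_tuple m x) p = nseq_tuple m y ->
  (L ^ m).-1 <= size p.
Proof.
move=> L_gt0 hx hy; apply: lipschitz_path_lower (@word_height_lipschitz m) _.
by rewrite /= !rev_nseq word_height_nseq0 // word_height_nseq_max.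
Qed.

End HeightFunction.

Lemma INR_expn a n : INR (a ^ n) = pow (INR a) n.
Proof. by elim: n => //= n <-; rewrite expnS mult_INR. Qed.

Lemma Rle_Rinv_mul_INR (c a b : nat) : 0 < c -> a <= c * b -> Rle (Rinv (INR c) * INR a) (INR b).
Proof.
move=> c_gt0 le_ab; have c_pos : Rlt 0 (INR c) by apply: lt_0_INR; apply/ltP.
apply: (Rmult_le_reg_l (INR c)) => //.
rewrite -Rmult_assoc Rinv_r ?Rmult_1_l; last exact: Rgt_not_eq.
by rewrite -mult_INR; apply: le_INR; apply/leP.
Qed.

Lemma diam_estimate_of_bounds T (G : igs T) (L B : nat) : 1 < L ->
  (forall n (x y : n.-tuple (sym G)), reach (rg_adj G n) (B * L ^ n) x y) ->
  (forall n, exists x y : n.-tuple (sym G),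
     forall p, path (rg_adj G n) x p -> last x p = y -> (L ^ n).-1 <= size p) ->
  diam_estimate G.
Proof.
move=> L_gt1 upper lower; exists (INR B.+2), (INR L); split; [|split].
- by apply: (le_INR 1); apply/leP.
- by apply: (lt_INR 1); apply/ltP.
move=> n n_gt0; have [x [y lower_n]] := lower n.
have [D [diamD lowD upD]] := is_diameter_between (upper n) lower_n.
have Ln_ge2 : 2 <= L ^ n by rewrite (leq_trans L_gt1) // -{1}(expn1 L) leq_exp2l.
exists D; split=> //; rewrite -INR_expn -mult_INR; split.
  by apply: Rle_Rinv_mul_INR => //; nia.
by apply: le_INR; apply/leP; nia.
Qed.

Lemma undirected_sym T (G : igs T) : symmetric (undirected G).
Proof. by move=> x y; rewrite /undirected orbC. Qed.

Lemma reach_upper_glue_rev T (G : igs T) (c0 : sym G) :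
  irreflexive (edge G) -> (forall x y, edge G x y -> glue G (etype G x y) y x) ->
  (forall x, connect (undirected G) x c0) ->
  forall n (x y : n.-tuple (sym G)), reach (rg_adj G n) (2 * #|sym G| * #|sym G|.+1 * 2 ^ n) x y.
Proof.
move=> edge_irr glue_rev connected n.
apply: (reach_upper edge_irr (hub := predT)) => // [x y exy|m u v _ _].
  by exists y, x; split=> //; exact: glue_rev.
have /connect_reach r_uv : connect (undirected G) u v.
  by apply: connect_trans (connected u) _; rewrite (sym_connect_sym (@undirected_sym _ G)).
by apply: reach_le (reach_nseq edge_irr glue_rev m r_uv); rewrite leq_mul // leq_pred.
Qed.

Definition g0 : sym gasket := @Ordinal 3 0 isT.
Definition g1 : sym gasket := @Ordinal 3 1 isT.

Lemma gasket_irreflexive : irreflexive (edge gasket).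
Proof. by case=> [[|[|[|?]]] ?]. Qed.

Lemma gasket_glue_rev (x y : sym gasket) : edge gasket x y -> glue gasket (etype gasket x y) y x.
Proof.
case: x => [[|[|[|?]]] ?] //; case: y => [[|[|[|?]]] ?] // _.
all: by rewrite /= /gasket_glue /gasket_type /= ?inordK.
Qed.

Lemma gasket_connected (x : sym gasket) : connect (undirected gasket) x g0.
Proof.
case: x => [[|[|[|?]]] lt_x3] //; try exact: connect1.
by rewrite (_ : Ordinal lt_x3 = g0) //; apply: val_inj.
Qed.

(* The height separates vertex 0 from the opposite side 12 of the triangle,
   to which the edges of type b are parallel. *)
Definition gasket_height (x : sym gasket) : nat := val x != 0.
Definition gasket_step (t : 'I_3) : nat := val t != 1.

Lemma gasket_height_edge (x y : sym gasket) : edge gasket x y ->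
  gasket_height y = gasket_height x + gasket_step (etype gasket x y).
Proof.
case: x => [[|[|[|?]]] ?] //; case: y => [[|[|[|?]]] ?] // _.
all: by rewrite /= /gasket_step /gasket_type /= ?inordK.
Qed.

Lemma gasket_height_glue t (x y : sym gasket) : glue gasket t x y ->
  gasket_height x + gasket_step t = 2 * gasket_step t + gasket_height y.
Proof.
by case: t => [[|[|[|?]]] ?] //; case: x => [[|[|[|?]]] ?] //; case: y => [[|[|[|?]]] ?].
Qed.

Lemma gasket_diam_estimate : diam_estimate gasket.
Proof.
apply: (diam_estimate_of_bounds (L := 2)) => // [|n].
  exact: reach_upper_glue_rev gasket_irreflexive gasket_glue_rev gasket_connected.
exists (nseq_tuple n g0), (nseq_tuple n g1).
by apply: (height_path_lower gasket_height_edge gasket_height_glue) => // t; exact: leq_b1.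
Qed.

Lemma homo_iter (V : Type) (e : rel V) (h : V -> V) k :
  {homo h : x y / e x y} -> {homo iter k h : x y / e x y}.
Proof. by move=> h_homo; elim: k => //= k IHk x y /IHk /h_homo. Qed.

Lemma val_iter_map_tuple (A : Type) n (h : A -> A) k (w : n.-tuple A) :
  val (iter k (map_tuple h) w) = map (iter k h) w.
Proof. by elim: k => [|k IHk] /=; rewrite ?map_id // IHk -map_comp. Qed.

Definition k0 : sym carpet := @Ordinal 5 0 isT.
Definition k2 : sym carpet := @Ordinal 5 2 isT.
Definition k3 : sym carpet := @Ordinal 5 3 isT.

Definition crot (x : sym carpet) : sym carpet := Ordinal (ltn_pmod x.+1 (isT : 0 < 5)).
Definition cflip (x : sym carpet) : sym carpet := Ordinal (ltn_pmod (6 - x) (isT : 0 < 5)).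
Definition cflip_type (t : 'I_5) : 'I_5 := Ordinal (ltn_pmod (5 - t) (isT : 0 < 5)).

Ltac case5 x := case: x => [[|[|[|[|[|?]]]]] ?].

Lemma crotK : cancel crot (iter 4 crot).
Proof. by move=> x; apply: val_inj; case5 x. Qed.

Lemma cflip_involutive : involutive cflip.
Proof. by move=> x; apply: val_inj; case5 x. Qed.

Lemma carpet_edge_crot (x y : sym carpet) : edge carpet x y -> y = crot x.
Proof. by move/eqP=> y_x; apply: val_inj. Qed.

Lemma carpet_irreflexive : irreflexive (edge carpet).
Proof. by move=> x; case5 x. Qed.

Lemma carpet_glue_rev (x y : sym carpet) : edge carpet x y -> glue carpet (etype carpet x y) y x.
Proof. by case5 x => //; case5 y. Qed.

Lemma carpet_connected (x : sym carpet) : connect (undirected carpet) x k0.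
Proof.
case: x => [[|[|[|[|[|?]]]]] lt_x5] //; try exact: connect1.
- by rewrite (_ : Ordinal lt_x5 = k0) //; apply: val_inj.
- by apply: (@connect_trans _ _ (crot k0)); apply: connect1.
- by apply: (@connect_trans _ _ (iter 4 crot k0)); apply: connect1.
Qed.

Lemma rg_adj_crot m (w v : m.-tuple (sym carpet)) :
  rg_adj carpet m (map_tuple crot w) (map_tuple crot v) = rg_adj carpet m w v.
Proof.
apply: (rg_adj_map (g := crot) (can_inj crotK)) => [x y|//|t x y].
  by case5 x => //; case5 y.
by case5 t => //; case5 x => //; case5 y.
Qed.

Lemma rg_adj_cflip m (w v : m.-tuple (sym carpet)) :
  rg_adj carpet m (map_tuple cflip w) (map_tuple cflip v) = rg_adj carpet m w v.
Proof.
apply: (rg_adj_map_flip (g := cflip_type) (inv_inj cflip_involutive)) => [x y|x y|t x y].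
- by case5 x => //; case5 y.
- by case5 x => //; case5 y => // _; apply: val_inj.
- by case5 t => //; case5 x => //; case5 y.
Qed.

Definition side (i : sym carpet) (w : seq (sym carpet)) : bool :=
  all (fun x => (x == i) || (x == crot i)) w.

Lemma side_crot i w : side i w -> side (crot i) (map crot w).
Proof.
rewrite /side all_map; apply: sub_all => x /=.
by case/orP => /eqP ->; rewrite eqxx ?orbT.
Qed.

Lemma side_iter_crot k i w : side i w -> side (iter k crot i) (map (iter k crot) w).
Proof.
elim: k => [|k IHk] side_w; first by rewrite map_id.
have -> : map (iter k.+1 crot) w = map crot (map (iter k crot) w) by rewrite -map_comp.
exact/side_crot/IHk.
Qed.

Lemma side_nseq n i : side i (nseq n i).
Proof. by rewrite /side all_nseq eqxx orbT. Qed.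

Lemma glue_side t (x y : sym carpet) : glue carpet t x y ->
  ((x == crot t) || (x == crot (crot t))) &&
  ((y == iter 4 crot t) || (y == crot (iter 4 crot t))).
Proof. by case5 t => //; case5 x => //; case5 y. Qed.

Lemma all2_glue_side t (w v : seq (sym carpet)) : all2 (glue carpet t) w v ->
  side (crot t) w && side (iter 4 crot t) v.
Proof.
elim: w v => [|x w IHw] [|y v] //= /andP [/glue_side/andP[-> ->] /IHw].
by case/andP => -> ->.
Qed.

Lemma all2_glue0 (w v : seq (sym carpet)) : all2 (glue carpet k0) w v -> v = map cflip w.
Proof.
elim: w v => [|x w IHw] [|y v] //= /andP [gxy /IHw ->]; congr cons.
by apply: val_inj; move: gxy; case5 x => //; case5 y.
Qed.

Definition carpet_potential n (f : n.-tuple (sym carpet) -> nat) : Prop :=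
  [/\ lipschitz (rg_adj carpet n) f,
      forall w, f (map_tuple cflip w) = f w,
      forall w : n.-tuple _, side k0 w -> f w = 0
    , forall w : n.-tuple _, side k2 w -> (2 ^ n).-1 <= f w
    & forall w : n.-tuple _, side k3 w -> (2 ^ n).-1 <= f w].

Section CarpetStep.
Variables (n : nat) (f : n.-tuple (sym carpet) -> nat).
Hypothesis f_potential : carpet_potential f.

Local Notation width := (2 ^ n).-1.
Local Notation rotw k := (iter k (map_tuple crot)).

(* Copies 0 and 1 contain
   side 0 of G_(n+1); copy 0 is left through its side 3 towards copy 4, copy 1
   through its side 2 towards copy 2, and [rotw 2], [rotw 3] carry these sides
   to side 0.  Copies 2 and 4 are entered through their side 0, and copy 3 lies
   beyond them. *)
Definition carpet_copy_potential (a : sym carpet) (w : n.-tuple (sym carpet)) : nat :=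
  match val a with
  | 0 => minn (f w) (width.+1 + f (rotw 2 w))
  | 1 => minn (f w) (width.+1 + f (rotw 3 w))
  | 3 => width.*2.+1
  | _ => minn width.*2.+1 (width.+1 + f w)
  end.

Definition carpet_next_potential (x : n.+1.-tuple (sym carpet)) : nat :=
  carpet_copy_potential (thead x) [tuple of behead x].

Lemma carpet_next_potential_cons (a : sym carpet) (w : n.-tuple (sym carpet)) :
  carpet_next_potential [tuple of a :: w] = carpet_copy_potential a w.
Proof. by rewrite /carpet_next_potential theadE; congr carpet_copy_potential; apply: val_inj. Qed.

Lemma lipschitz_rotw k : lipschitz (rg_adj carpet n) (fun w => f (rotw k w)).
Proof.
case: f_potential => f_lip _ _ _ _; apply: (lipschitz_homo (h := rotw k)) f_lip.
by apply: homo_iter => w v; rewrite rg_adj_crot.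
Qed.

Lemma side_rotw k i (w : n.-tuple (sym carpet)) :
  side i w -> side (iter k crot i) (rotw k w).
Proof. by rewrite val_iter_map_tuple; exact: side_iter_crot. Qed.

Lemma rotw_side0 k i (w : n.-tuple (sym carpet)) :
  side i w -> iter k crot i == k0 -> f (rotw k w) = 0.
Proof.
case: f_potential => _ _ f0 _ _ /(side_rotw k) + /eqP rot_i.
by rewrite rot_i; exact: f0.
Qed.

Lemma rotw_cflip (w : n.-tuple (sym carpet)) :
  f (rotw 3 (map_tuple cflip w)) = f (rotw 2 w).
Proof.
case: f_potential => _ f_flip _ _ _; rewrite -[RHS]f_flip; congr f; apply: val_inj => /=.
by rewrite -!map_comp; apply: eq_map => x; apply: val_inj; case5 x.
Qed.

Lemma carpet_copy_potential_lipschitz a :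
  lipschitz (rg_adj carpet n) (carpet_copy_potential a).
Proof.
have [f_lip _ _ _ _] := f_potential.
rewrite /carpet_copy_potential; case: (val a) => [|[|[|[|k]]]];
  by do ?[apply: lipschitz_min | apply: lipschitz_addl | apply: lipschitz_rotw
         | apply: lipschitz_const | exact: f_lip].
Qed.

Lemma carpet_copy_potential_glue (a : sym carpet) (w v : n.-tuple (sym carpet)) :
  all2 (glue carpet a) w v ->
  carpet_copy_potential (crot a) v <= (carpet_copy_potential a w).+1 /\
  carpet_copy_potential a w <= (carpet_copy_potential (crot a) v).+1.
Proof.
have [_ f_flip f0 far2 far3] := f_potential.
move=> g_wv; have /andP[side_w side_v] := all2_glue_side g_wv.
move: g_wv side_w side_v; rewrite /carpet_copy_potential.
case: a => [[|[|[|[|[|?]]]]] lt_a5] //= g_wv side_w side_v.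
- have -> : v = map_tuple cflip w by apply: val_inj; exact: all2_glue0.
  by rewrite f_flip rotw_cflip.
- by have := far2 w side_w; rewrite (rotw_side0 (k := 3) side_w isT) (f0 v side_v); lia.
- by have := far3 w side_w; lia.
- by have := far2 v side_v; lia.
- by have := far3 v side_v; rewrite (f0 w side_w) (rotw_side0 (k := 2) side_v isT); lia.
Qed.

Lemma carpet_next_potential_lipschitz :
  lipschitz (rg_adj carpet n.+1) carpet_next_potential.
Proof.
move=> x y; case/tupleP: x => a w; case/tupleP: y => b v.
rewrite !carpet_next_potential_cons (rg_adj_cons carpet_irreflexive).
case: (a =P b) => [->|_].
  exact: carpet_copy_potential_lipschitz.
case/orP => /andP [/carpet_edge_crot -> g_wv].
  exact: (carpet_copy_potential_glue g_wv).1.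
exact: (carpet_copy_potential_glue g_wv).2.
Qed.

Lemma map_tuple_cflip_cons a (w : n.-tuple (sym carpet)) :
  map_tuple cflip [tuple of a :: w] = [tuple of cflip a :: map_tuple cflip w].
Proof. exact: val_inj. Qed.

Lemma carpet_next_potential_flip x :
  carpet_next_potential (map_tuple cflip x) = carpet_next_potential x.
Proof.
have [_ f_flip _ _ _] := f_potential.
have rotw2_cflip w : f (rotw 2 (map_tuple cflip w)) = f (rotw 3 w).
  rewrite -rotw_cflip; congr (f (rotw 3 _)); apply: val_inj => /=.
  by rewrite -map_comp (eq_map cflip_involutive) map_id.
case/tupleP: x => a w; rewrite map_tuple_cflip_cons !carpet_next_potential_cons.
rewrite /carpet_copy_potential f_flip.
by case: a => [[|[|[|[|[|?]]]]] ?] //=; rewrite ?rotw_cflip ?rotw2_cflip.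
Qed.

Lemma width_succ : (2 ^ n.+1).-1 = width.*2.+1.
Proof. by rewrite expnS -addnn; have := expn_gt0 2 n; lia. Qed.

Lemma carpet_next_potentialP : carpet_potential carpet_next_potential.
Proof.
have [_ _ f0 far2 far3] := f_potential.
split.
- exact: carpet_next_potential_lipschitz.
- exact: carpet_next_potential_flip.
- case/tupleP=> a w /andP[a_side w_side]; rewrite carpet_next_potential_cons.
  by case/orP: a_side => /eqP->; rewrite /carpet_copy_potential /= (f0 w w_side) min0n.
- case/tupleP=> a w /andP[a_side w_side]; rewrite carpet_next_potential_cons width_succ.
  have := far2 w w_side.
  by case/orP: a_side => /eqP->; rewrite /carpet_copy_potential /=; lia.
- case/tupleP=> a w /andP[a_side w_side]; rewrite carpet_next_potential_cons width_succ.
  have := far3 w w_side.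
  by case/orP: a_side => /eqP->; rewrite /carpet_copy_potential /=; lia.
Qed.

End CarpetStep.

Lemma carpet_potential_exists n : exists f : n.-tuple (sym carpet) -> nat, carpet_potential f.
Proof.
elim: n => [|n [f f_potential]]; first by exists (fun=> 0); split=> //; exact: lipschitz_const.
by exists (carpet_next_potential f); exact: carpet_next_potentialP.
Qed.

Lemma carpet_diam_estimate : diam_estimate carpet.
Proof.
apply: (diam_estimate_of_bounds (L := 2)) => // [|n].
  exact: reach_upper_glue_rev carpet_irreflexive carpet_glue_rev carpet_connected.
have [f [f_lip _ f0 far2 _]] := carpet_potential_exists n.
exists (nseq_tuple n k0), (nseq_tuple n k2); apply: lipschitz_path_lower f_lip _.
by rewrite (f0 _ (side_nseq n k0)) add0n; apply/far2/side_nseq.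
Qed.

Section CubeEdges.
Variables (d L s : nat).
Implicit Types (u v : cube_sym d L s) (j k : 'I_d).

Lemma cube_edge_agree j k u v : cube_edge j u v -> j != k -> u.1 k = v.1 k.
Proof. by move=> /andP[/forallP/(_ k) agree _] jk; move: agree; rewrite (eq_sym k) jk => /eqP. Qed.

Lemma cube_edge_uniq j k u v : cube_edge j u v -> cube_edge k u v -> j = k.
Proof.
move=> e_j; apply: contraTeq => jk.
by rewrite /cube_edge (cube_edge_agree e_j jk); apply/negP => /andP[_ /eqP]; lia.
Qed.

Lemma cube_edge_asym j k u v : cube_edge j u v -> cube_edge k v u -> False.
Proof.
move=> e_j; have [<-|jk] := eqVneq j k.
  by case/andP: e_j => _ /eqP + /andP[_ /eqP]; lia.
by rewrite /cube_edge (cube_edge_agree e_j jk) => /andP[_ /eqP]; lia.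
Qed.

End CubeEdges.

Section Cubical.
Variables (d L s : nat) (hd : 0 < d) (G : igs 'I_d) (iota : sym G -> cube_sym d L s).
Hypotheses (L_ge3 : 3 <= L) (s_gt0 : 0 < s) (G_cubical : cubical d L s hd G iota).

Let L_gt0 : 0 < L. Proof. exact: leq_trans L_ge3. Qed.
Let L_pred_lt : L.-1 < L. Proof. by rewrite ltn_predL. Qed.
Let G_igs : is_igs G. Proof. by case: G_cubical. Qed.
Let edge_irr : irreflexive (edge G). Proof. exact: is_igs_irreflexive. Qed.
Let iota_inj : injective iota. Proof. by case: G_cubical => _ []. Qed.

Definition j0 : 'I_d := Ordinal hd.
Definition origin : cube_sym d L s := ([ffun=> Ordinal L_gt0], Ordinal s_gt0).
Definition axis (j : 'I_d) (k : nat) : cube_sym d L s :=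
  ([ffun i => if i == j then insubd (Ordinal L_gt0) k else Ordinal L_gt0], Ordinal s_gt0).

Lemma axis_val j k i : val ((axis j k).1 i) = if (i == j) && (k < L) then k else 0.
Proof. by rewrite ffunE; case: (i == j); rewrite //= val_insubd; case: (k < L). Qed.

Lemma axis0 j : axis j 0 = origin.
Proof. by congr pair; apply/ffunP => i; apply: val_inj; rewrite axis_val ffunE; case: ifP. Qed.

Lemma star_axis j k : star j (axis j k).
Proof.
rewrite /star andbT; apply/forallP => i; apply/implyP => /negbTE ij.
by rewrite axis_val ij.
Qed.

Lemma agree_off_axis j k k' : agree_off j (axis j k) (axis j k').
Proof. by apply/forallP => i; apply/implyP => /negbTE ij; rewrite !ffunE ij. Qed.

Lemma axis_in_image j k : exists x, iota x == axis j k.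
Proof.
have [_ [_ [_ [C1 _]]]] := G_cubical.
by have [x <-] := C1 j _ (star_axis j k); exists x.
Qed.

Definition axis_sym j k : sym G := xchoose (axis_in_image j k).
Definition origin_sym : sym G := axis_sym j0 0.
Definition corner j : sym G := axis_sym j L.-1.

Lemma iota_axis_sym j k : iota (axis_sym j k) = axis j k.
Proof. exact/eqP/(xchooseP (axis_in_image j k)). Qed.

Lemma axis_sym0 j : axis_sym j 0 = origin_sym.
Proof. by apply: iota_inj; rewrite !iota_axis_sym !axis0. Qed.

Lemma edge_axis j k : k.+1 < L -> edge G (axis_sym j k) (axis_sym j k.+1).
Proof.
have [_ [_ [_ [_ [C2 _]]]]] := G_cubical.
move=> lt_k1L; apply: (C2 j); rewrite !iota_axis_sym ?star_axis ?agree_off_axis //.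
by rewrite !axis_val eqxx lt_k1L ltnW.
Qed.

Lemma glue_corner_origin j : glue G j (corner j) origin_sym.
Proof.
have [_ [_ [_ [_ [_ [C3 _]]]]]] := G_cubical.
rewrite -(axis_sym0 j); apply: C3; rewrite !iota_axis_sym ?star_axis ?agree_off_axis //.
  by rewrite axis_val eqxx L_pred_lt.
by rewrite axis_val; case: ifP.
Qed.

Lemma iota_origin_sym : iota origin_sym = origin.
Proof. by rewrite iota_axis_sym axis0. Qed.

Lemma iota_corner_val j : val ((iota (corner j)).1 j) = L.-1.
Proof. by rewrite iota_axis_sym axis_val eqxx L_pred_lt. Qed.

(* The gluing rule of type t relates corner t to the origin, which pins down
   the direction of every edge of type t under the inclusion. *)
Lemma iota_edge x y : edge G x y -> cube_edge (etype G x y) (iota x) (iota y).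
Proof.
move=> exy; set t := etype G x y; have g_co := glue_corner_origin t.
have [_ [_ [[map_edge [_ [map_fwd map_bwd]]] _]]] := G_cubical.
case: (map_edge _ _ exy) => [/iota_inj xy|[e_fwd|e_bwd]].
- by move: exy; rewrite xy edge_irr.
- have := map_fwd _ _ exy e_fwd _ _ g_co; rewrite /= iota_origin_sym.
  case: pickP => [j e_j /and4P[agree_j _ _ _]|none]; last first.
    by case/existsP: e_fwd => j; rewrite none.
  have [<-//|jt] := eqVneq j t; move/forallP/(_ t): agree_j; rewrite eq_sym jt /=.
  by move/eqP/(congr1 val); rewrite iota_corner_val ffunE /=; lia.
- have := map_bwd _ _ exy e_bwd _ _ g_co; rewrite /= iota_origin_sym.
  by case/and4P=> _; rewrite ffunE /= => /eqP; lia.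
Qed.

Lemma iota_glue t x y : glue G t x y -> cube_glue t (iota x) (iota y).
Proof.
have [_ [_ [_ [surj _]]]] := G_igs.
have [_ [_ [[map_edge [_ [map_fwd _]]] _]]] := G_cubical.
move=> g_xy; have [u [v [e_uv t_uv]]] := surj t.
have e_t := iota_edge e_uv; rewrite t_uv in e_t.
case: (map_edge _ _ e_uv) => [/iota_inj uv|[e_fwd|/existsP[k e_k]]].
- by move: e_uv; rewrite uv edge_irr.
- have := map_fwd _ _ e_uv e_fwd x y; rewrite t_uv => /(_ g_xy) /=.
  case: pickP => [j e_j|none]; first by rewrite (cube_edge_uniq e_j e_t).
  by case/existsP: e_fwd => j; rewrite none.
- by case: (cube_edge_asym e_t e_k).
Qed.

Lemma etype_axis j k : k.+1 < L -> etype G (axis_sym j k) (axis_sym j k.+1) = j.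
Proof.
move=> lt_k1L; have := iota_edge (edge_axis j lt_k1L); rewrite !iota_axis_sym => e_t.
apply: cube_edge_uniq e_t _.
by rewrite /cube_edge agree_off_axis !axis_val eqxx lt_k1L (ltnW lt_k1L) /=.
Qed.

Definition cube_height (x : sym G) : nat := val ((iota x).1 j0).
Definition cube_step (t : 'I_d) : nat := t == j0.

Lemma cube_height_edge x y : edge G x y ->
  cube_height y = cube_height x + cube_step (etype G x y).
Proof.
move/iota_edge; rewrite /cube_height /cube_step.
have [->|tj] := eqVneq (etype G x y) j0; first by case/andP=> _ /eqP->; rewrite addn1.
by move/cube_edge_agree/(_ tj)->; rewrite addn0.
Qed.

Lemma cube_height_glue t x y : glue G t x y ->
  cube_height x + cube_step t = L * cube_step t + cube_height y.
Proof.
move/iota_glue/and4P=> [agree_t /eqP x_last /eqP y_first _]; rewrite /cube_height /cube_step.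
have [tj|tj] := eqVneq t j0; first by rewrite -tj x_last y_first /=; lia.
by move/forallP/(_ j0): agree_t; rewrite eq_sym tj => /eqP->; rewrite muln0 addn0.
Qed.

Lemma reach_axis_copies n j :
  reach (rg_adj G n) (L ^ n).-1 (nseq_tuple n origin_sym) (nseq_tuple n (corner j)) ->
  forall k, k < L -> reach (rg_adj G n.+1) (k * L ^ n + (L ^ n).-1)
    [tuple of origin_sym :: nseq_tuple n origin_sym]
    [tuple of axis_sym j k :: nseq_tuple n (corner j)].
Proof.
move=> across; elim=> [_|k IHk lt_k1L]; first by rewrite axis_sym0; exact: reach_cons.
have e_k := edge_axis j lt_k1L.
have g_k : glue G (etype G (axis_sym j k) (axis_sym j k.+1)) (corner j) origin_sym.
  by rewrite etype_axis //; exact: glue_corner_origin.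
have cross := rg_adj_glue edge_irr n e_k g_k.
have := reach_trans (reach1 cross) (reach_cons edge_irr _ across).
move/(reach_trans (IHk (ltnW lt_k1L))).
by apply: reach_le; have := expn_gt0 L n; rewrite L_gt0 mulSn; lia.
Qed.

Lemma reach_axis n j :
  reach (rg_adj G n) (L ^ n).-1 (nseq_tuple n origin_sym) (nseq_tuple n (corner j)).
Proof.
elim: n => [|n IHn]; first by exists [::]; do !split; apply: val_inj.
rewrite !nseq_tupleS; apply: reach_le _ (reach_axis_copies IHn L_pred_lt).
by rewrite expnS; have := expn_gt0 L n; rewrite L_gt0; move: (L ^ n) => Ln; nia.
Qed.

Definition cube_hub (x : sym G) : bool := (x == origin_sym) || [exists j, x == corner j].

Lemma reach_hub_origin n x : cube_hub x ->
  reach (rg_adj G n) (L ^ n) (nseq_tuple n x) (nseq_tuple n origin_sym).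
Proof.
case/orP=> [/eqP->|/existsP[j /eqP->]]; first exact: reach_refl.
by apply: reach_le (leq_pred _) (reach_sym (@rg_adj_sym _ _ _) (reach_axis n j)).
Qed.

Lemma reach_cube_hub n u v : cube_hub u -> cube_hub v ->
  reach (rg_adj G n) (2 * L ^ n) (nseq_tuple n u) (nseq_tuple n v).
Proof.
move=> hub_u hub_v; rewrite mul2n -addnn.
apply: reach_trans (reach_hub_origin n hub_u) _.
exact: reach_sym (@rg_adj_sym _ _ _) (reach_hub_origin n hub_v).
Qed.

Lemma glue_cube_hub x y : edge G x y ->
  exists u v, [/\ cube_hub u, cube_hub v & glue G (etype G x y) u v].
Proof.
move=> _; exists (corner (etype G x y)), origin_sym; split.
- by apply/orP; right; apply/existsP; exists (etype G x y).
- by rewrite /cube_hub eqxx.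
- exact: glue_corner_origin.
Qed.

Lemma cubical_diam_estimate : diam_estimate G.
Proof.
have L_gt1 : 1 < L by exact: leq_trans L_ge3.
have [_ [_ [connected _]]] := G_igs.
apply: (diam_estimate_of_bounds L_gt1) => [n x y|n].
  have hub_origin : cube_hub origin_sym by rewrite /cube_hub eqxx.
  exact: (reach_upper edge_irr hub_origin L_gt1 glue_cube_hub (connected^~ _) reach_cube_hub).
exists (nseq_tuple n origin_sym), (nseq_tuple n (corner j0)).
apply: (height_path_lower cube_height_edge cube_height_glue) => //.
- by move=> t; exact: leq_b1.
- by rewrite /cube_height iota_origin_sym ffunE.
- exact: iota_corner_val.
Qed.

End Cubical.

Theorem theorem5p14 :
  (forall (d L s : nat) (hd : 0 < d), 3 <= L -> 0 < s ->
     forall (G : igs 'I_d) (iota : sym G -> cube_sym d L s),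
       cubical d L s hd G iota -> diam_estimate G) /\
  diam_estimate gasket /\
  diam_estimate carpet.
Proof.
split; last by split; [exact: gasket_diam_estimate | exact: carpet_diam_estimate].
by move=> d L s hd L_ge3 s_gt0 G iota; exact: cubical_diam_estimate.
Qed.
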